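(* Consider the single-node stochastic clearing problem described in the context, and assume the incremental bid prices $\Delta\alpha_i^{g,+},\Delta\alpha_i^{g,-},\Delta\alpha_j^{d,+},\Delta\alpha_j^{d,-}$ are all positive. Let $(d_j,g_i,D_j(\cdot),G_i(\cdot))$ be an optimal solution with associated prices $(\pi,\Pi(\cdot))$. Then the price distortion $\mathcal{M}^\pi:=\pi-\mathbb{E}[\Pi(\omega)]$ satisfies $$-\Delta\alpha^+\le\mathcal{M}^\pi\le\Delta\alpha^-,$$ where $\Delta\alpha^+=\min\{\min_{i\in\mathcal{G}}\Delta\alpha_i^{g,+},\min_{j\in\mathcal{D}}\Delta\alpha_j^{d,+}\}$ and $\Delta\alpha^-=\min\{\min_{i\in\mathcal{G}}\Delta\alpha_i^{g,-},\min_{j\in\mathcal{D}}\Delta\alpha_j^{d,-}\}$.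
   Context: Finite nonempty sets of suppliers $\mathcal{G}$ and consumers $\mathcal{D}$; a finite scenario set $\Omega$ with probabilities $p(\omega)>0$, $\sum_\omega p(\omega)=1$, and $\mathbb{E}[Y(\omega)]=\sum_\omega p(\omega)Y(\omega)$. Data: bid prices $\alpha_i^g,\alpha_j^d\ge 0$, incremental bid prices $\Delta\alpha_i^{g,\pm},\Delta\alpha_j^{d,\pm}$, real-time capacities $\bar G_i(\omega),\bar D_j(\omega)\ge 0$. $(x)_+=\max\{x,0\}$, $(x)_-=\max\{-x,0\}$. The single-node stochastic clearing problem is: minimize over free day-ahead variables $g_i,d_j\in\mathbb{R}$ and real-time variables $G_i(\omega),D_j(\omega)$ $$\sum_{i\in\mathcal{G}}\mathbb{E}[\alpha_i^gG_i(\omega)+\Delta\alpha_i^{g,+}(G_i(\omega)-g_i)_++\Delta\alpha_i^{g,-}(G_i(\omega)-g_i)_-]+\sum_{j\in\mathcal{D}}\mathbb{E}[-\alpha_j^dD_j(\omega)+\Delta\alpha_j^{d,+}(D_j(\omega)-d_j)_-+\Delta\alpha_j^{d,-}(D_j(\omega)-d_j)_+]$$ subject to $\sum_i g_i=\sum_j d_j$ (multiplier $\pi$), $\sum_i(G_i(\omega)-g_i)=\sum_j(D_j(\omega)-d_j)$ for each $\omega$ (multiplier $p(\omega)\Pi(\omega)$), $0\le G_i(\omega)\le\bar G_i(\omega)$, $0\le D_j(\omega)\le\bar D_j(\omega)$. ''Optimal solution with associated prices $(\pi,\Pi(\cdot))$'' means the solution minimizes the partial Lagrange function $\text{objective}-\pi(\sum_ig_i-\sum_jd_j)-\mathbb{E}[\Pi(\omega)(\sum_i(G_i(\omega)-g_i)-\sum_j(D_j(\omega)-d_j))]$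 over all $g_i,d_j\in\mathbb{R}$ and all $G_i(\cdot),D_j(\cdot)$ satisfying the bound constraints. *)

From HB Require Import structures.
From mathcomp Require Import all_boot all_order all_algebra.
Set Implicit Arguments. Unset Strict Implicit. Unset Printing Implicit Defensive.
Import Order.TTheory GRing.Theory Num.Theory.
Local Open Scope ring_scope.

Section Market.
Context {R : realFieldType} {GT DT Om : finType}.

Definition pospart (x : R) : R := Num.max x 0.
Definition negpart (x : R) : R := Num.max (- x) 0.

Definition expect (p : Om -> R) (Y : Om -> R) : R := \sum_(w : Om) p w * Y w.

(* minimum of f over a nonempty finite type (x0 is any element; the value
   does not depend on it) *)
Definition finmin (T : finType) (x0 : T) (f : T -> R) : R :=
  \big[Num.min/f x0]_(x : T) f x.

Variables (p : Om -> R)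
  (ag : GT -> R) (ad : DT -> R)
  (dgp dgm : GT -> R) (ddp ddm : DT -> R)
  (Gbar : GT -> Om -> R) (Dbar : DT -> Om -> R).

Definition objective (g : GT -> R) (d : DT -> R)
    (Gr : GT -> Om -> R) (Dr : DT -> Om -> R) : R :=
  \sum_(i : GT) expect p (fun w => ag i * Gr i w
                         + dgp i * pospart (Gr i w - g i)
                         + dgm i * negpart (Gr i w - g i))
  + \sum_(j : DT) expect p (fun w => - ad j * Dr j w
                         + ddp j * negpart (Dr j w - d j)
                         + ddm j * pospart (Dr j w - d j)).

Definition lagrangian (pi : R) (Pi : Om -> R) (g : GT -> R) (d : DT -> R)
    (Gr : GT -> Om -> R) (Dr : DT -> Om -> R) : R :=
  objective g d Gr Dr
  - pi * (\sum_(i : GT) g i - \sum_(j : DT) d j)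
  - expect p (fun w => Pi w * (\sum_(i : GT) (Gr i w - g i)
                                 - \sum_(j : DT) (Dr j w - d j))).

Definition bounds_ok (Gr : GT -> Om -> R) (Dr : DT -> Om -> R) : Prop :=
  (forall i w, 0 <= Gr i w <= Gbar i w) /\ (forall j w, 0 <= Dr j w <= Dbar j w).

Definition feasible (g : GT -> R) (d : DT -> R)
    (Gr : GT -> Om -> R) (Dr : DT -> Om -> R) : Prop :=
  \sum_(i : GT) g i = \sum_(j : DT) d j /\
  (forall w, \sum_(i : GT) (Gr i w - g i) = \sum_(j : DT) (Dr j w - d j)) /\
  bounds_ok Gr Dr.

Definition optimal_with_prices (g : GT -> R) (d : DT -> R)
    (Gr : GT -> Om -> R) (Dr : DT -> Om -> R) (pi : R) (Pi : Om -> R) : Prop :=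
  feasible g d Gr Dr /\
  forall (g' : GT -> R) (d' : DT -> R) (Gr' : GT -> Om -> R) (Dr' : DT -> Om -> R),
    bounds_ok Gr' Dr' ->
    lagrangian pi Pi g d Gr Dr <= lagrangian pi Pi g' d' Gr' Dr'.

End Market.

(** Because the day-ahead quantities enter the real-time balance only as
    constants, the term [E[Pi (sum (G - g) - sum (D - d))]] of the Lagrangian
    splits off [E[Pi] (sum g - sum d)], and the Lagrangian separates into one
    term per day-ahead variable: the expected imbalance penalty plus [M] times
    that variable (with sign [-] for suppliers, [+] for consumers).  Positive
    and negative parts are monotone and 1-Lipschitz, so moving one day-ahead
    variable by a unit raises its penalty by at most one incremental bid
    price; since that variable is free, optimality of the Lagrangian forbids
    the move from paying off, which bounds [M] by the bid price. *)
From HB Require Import structures.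
From mathcomp Require Import all_boot all_order all_algebra.
From mathcomp Require Import ring lra.
Import Order.TTheory GRing.Theory Num.Theory.
Local Open Scope ring_scope.

Section Penalty.
Context {R : realFieldType}.
Implicit Types a b y t : R.

Lemma pospartB_le y t : 0 <= t -> pospart (y - t) <= pospart y.
Proof. by move=> t_ge0; rewrite /pospart !maxEle; do 2 case: ifP; lra. Qed.

Lemma pospartD_le y t : 0 <= t -> pospart (y + t) <= pospart y + t.
Proof. by move=> t_ge0; rewrite /pospart !maxEle; do 2 case: ifP; lra. Qed.

Lemma negpartB_le y t : 0 <= t -> negpart (y - t) <= negpart y + t.
Proof. by move=> t_ge0; rewrite /negpart !maxEle; do 2 case: ifP; lra. Qed.

Lemma negpartD_le y t : 0 <= t -> negpart (y + t) <= negpart y.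
Proof. by move=> t_ge0; rewrite /negpart !maxEle; do 2 case: ifP; lra. Qed.

Lemma penaltyB_le a b y t : 0 <= a -> 0 <= b -> 0 <= t ->
  a * pospart (y - t) + b * negpart (y - t)
    <= a * pospart y + b * negpart y + b * t.
Proof.
move=> a_ge0 b_ge0 t_ge0; rewrite -addrA -mulrDr.
by apply: lerD; apply: ler_wpM2l => //; [exact: pospartB_le | exact: negpartB_le].
Qed.

Lemma penaltyD_le a b y t : 0 <= a -> 0 <= b -> 0 <= t ->
  a * pospart (y + t) + b * negpart (y + t)
    <= a * pospart y + b * negpart y + a * t.
Proof.
move=> a_ge0 b_ge0 t_ge0; rewrite addrAC -mulrDr.
by apply: lerD; apply: ler_wpM2l => //; [exact: pospartD_le | exact: negpartD_le].
Qed.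

End Penalty.

Section Expectation.
Context {R : realFieldType} {Om : finType} {p : Om -> R}.
Implicit Types (f h : Om -> R) (c : R).

Lemma eq_expect f h : f =1 h -> expect p f = expect p h.
Proof. by move=> eq_fh; apply: eq_bigr => w _; rewrite eq_fh. Qed.

Lemma expect_mulrBr (Pi S : Om -> R) c :
  expect p (fun w => Pi w * (S w - c))
    = expect p (fun w => Pi w * S w) - c * expect p Pi.
Proof. by rewrite /expect mulr_sumr -sumrB; apply: eq_bigr => w _; ring. Qed.

Hypothesis p_ge0 : forall w, 0 <= p w.

Lemma ler_expect f h : (forall w, f w <= h w) -> expect p f <= expect p h.
Proof. by move=> le_fh; apply: ler_sum => w _; exact: ler_wpM2l. Qed.

Hypothesis p_sum1 : \sum_w p w = 1.

Lemma expectDr f c : expect p (fun w => f w + c) = expect p f + c.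
Proof.
by rewrite /expect -[X in _ + X]mul1r -p_sum1 mulr_suml -big_split;
  apply: eq_bigr => w _; rewrite mulrDr.
Qed.

End Expectation.

Lemma sumr_update (V : zmodType) (T : finType) (F : T -> V -> V)
    (g : T -> V) (i : T) (x : V) :
  \sum_k F k ([eta g with i |-> x] k) = \sum_k F k (g k) - F i (g i) + F i x.
Proof.
rewrite (bigD1 i) //= [in RHS](bigD1 i) //= eqxx [F i (g i) + _]addrC addrK addrC.
by congr (_ + _); apply: eq_bigr => k /negbTE /= ->.
Qed.

Lemma le_finmin (R : realFieldType) (T : finType) (x0 : T) (f : T -> R) (c : R) :
  (forall x, c <= f x) -> c <= finmin x0 f.
Proof.
move=> c_le_f; rewrite /finmin; elim/big_ind: _ => // x y cx cy.
by rewrite le_min cx cy.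
Qed.

Section Clearing.
Context {R : realFieldType} {GT DT Om : finType} {p : Om -> R}
  {ag : GT -> R} {ad : DT -> R} {dgp dgm : GT -> R} {ddp ddm : DT -> R}
  {Gr : GT -> Om -> R} {Dr : DT -> Om -> R} { pi : R } {Pi : Om -> R}.

Let M := pi - expect p Pi.

Definition supplier_cost (i : GT) (x : R) (w : Om) : R :=
  ag i * Gr i w + dgp i * pospart (Gr i w - x) + dgm i * negpart (Gr i w - x).

Definition consumer_cost (j : DT) (x : R) (w : Om) : R :=
  - ad j * Dr j w + ddp j * negpart (Dr j w - x) + ddm j * pospart (Dr j w - x).

Definition supplier_term (i : GT) (x : R) : R :=
  expect p (supplier_cost i x) - M * x.

Definition consumer_term (j : DT) (x : R) : R :=
  expect p (consumer_cost j x) + M * x.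

Lemma lagrangian_separates (g : GT -> R) (d : DT -> R) :
  lagrangian p ag ad dgp dgm ddp ddm pi Pi g d Gr Dr
    = \sum_i supplier_term i (g i) + \sum_j consumer_term j (d j)
      - expect p (fun w => Pi w * (\sum_i Gr i w - \sum_j Dr j w)).
Proof.
have balance w : \sum_i (Gr i w - g i) - \sum_j (Dr j w - d j)
    = (\sum_i Gr i w - \sum_j Dr j w) - (\sum_i g i - \sum_j d j).
  by rewrite !sumrB; ring.
rewrite /lagrangian /objective /supplier_term /consumer_term.
under eq_expect => w do rewrite balance.
rewrite expect_mulrBr sumrB big_split /= -!mulr_sumr /M; ring.
Qed.

Hypotheses (p_ge0 : forall w, 0 <= p w) (p_sum1 : \sum_w p w = 1).

Section Supplier.
Variable i : GT.
Hypotheses (dgp_ge0 : 0 <= dgp i) (dgm_ge0 : 0 <= dgm i).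

Lemma supplier_termD_le x t : 0 <= t ->
  supplier_term i (x + t) <= supplier_term i x + (dgm i - M) * t.
Proof.
move=> t_ge0.
have cost_le w : supplier_cost i (x + t) w <= supplier_cost i x w + dgm i * t.
  rewrite /supplier_cost.
  have -> : Gr i w - (x + t) = Gr i w - x - t by ring.
  have := penaltyB_le _ _ (Gr i w - x) _ dgp_ge0 dgm_ge0 t_ge0; lra.
have := ler_expect p_ge0 _ _ cost_le; rewrite expectDr // /supplier_term; lra.
Qed.

Lemma supplier_termB_le x t : 0 <= t ->
  supplier_term i (x - t) <= supplier_term i x + (dgp i + M) * t.
Proof.
move=> t_ge0.
have cost_le w : supplier_cost i (x - t) w <= supplier_cost i x w + dgp i * t.
  rewrite /supplier_cost.
  have -> : Gr i w - (x - t) = Gr i w - x + t by ring.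
  have := penaltyD_le _ _ (Gr i w - x) _ dgp_ge0 dgm_ge0 t_ge0; lra.
have := ler_expect p_ge0 _ _ cost_le; rewrite expectDr // /supplier_term; lra.
Qed.

End Supplier.

Section Consumer.
Variable j : DT.
Hypotheses (ddp_ge0 : 0 <= ddp j) (ddm_ge0 : 0 <= ddm j).

Lemma consumer_termD_le x t : 0 <= t ->
  consumer_term j (x + t) <= consumer_term j x + (ddp j + M) * t.
Proof.
move=> t_ge0.
have cost_le w : consumer_cost j (x + t) w <= consumer_cost j x w + ddp j * t.
  rewrite /consumer_cost.
  have -> : Dr j w - (x + t) = Dr j w - x - t by ring.
  have := penaltyB_le _ _ (Dr j w - x) _ ddm_ge0 ddp_ge0 t_ge0; lra.
have := ler_expect p_ge0 _ _ cost_le; rewrite expectDr // /consumer_term; lra.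
Qed.

Lemma consumer_termB_le x t : 0 <= t ->
  consumer_term j (x - t) <= consumer_term j x + (ddm j - M) * t.
Proof.
move=> t_ge0.
have cost_le w : consumer_cost j (x - t) w <= consumer_cost j x w + ddm j * t.
  rewrite /consumer_cost.
  have -> : Dr j w - (x - t) = Dr j w - x + t by ring.
  have := penaltyD_le _ _ (Dr j w - x) _ ddm_ge0 ddp_ge0 t_ge0; lra.
have := ler_expect p_ge0 _ _ cost_le; rewrite expectDr // /consumer_term; lra.
Qed.

End Consumer.

Context {Gbar : GT -> Om -> R} {Dbar : DT -> Om -> R} {g : GT -> R} {d : DT -> R}.
Hypothesis opt : optimal_with_prices p ag ad dgp dgm ddp ddm Gbar Dbar g d Gr Dr pi Pi.

Lemma supplier_term_min i x : supplier_term i (g i) <= supplier_term i x.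
Proof.
case: opt => [[_ [_ bounds]] minimal].
have := minimal [eta g with i |-> x] d Gr Dr bounds.
rewrite !lagrangian_separates sumr_update; lra.
Qed.

Lemma consumer_term_min j x : consumer_term j (d j) <= consumer_term j x.
Proof.
case: opt => [[_ [_ bounds]] minimal].
have := minimal g [eta d with j |-> x] Gr Dr bounds.
rewrite !lagrangian_separates sumr_update; lra.
Qed.

Lemma supplier_distortion_bounds i : 0 <= dgp i -> 0 <= dgm i -> - dgp i <= M <= dgm i.
Proof.
move=> dgp_ge0 dgm_ge0.
have := supplier_term_min i (g i + 1).
have := supplier_termD_le i dgp_ge0 dgm_ge0 (g i) 1 ler01.
have := supplier_term_min i (g i - 1).
have := supplier_termB_le i dgp_ge0 dgm_ge0 (g i) 1 ler01.
lra.
Qed.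

Lemma consumer_distortion_bounds j : 0 <= ddp j -> 0 <= ddm j -> - ddp j <= M <= ddm j.
Proof.
move=> ddp_ge0 ddm_ge0.
have := consumer_term_min j (d j + 1).
have := consumer_termD_le j ddp_ge0 ddm_ge0 (d j) 1 ler01.
have := consumer_term_min j (d j - 1).
have := consumer_termB_le j ddp_ge0 ddm_ge0 (d j) 1 ler01.
lra.
Qed.

End Clearing.

Theorem theorem2 (R : realFieldType) (GT DT Om : finType) (i0 : GT) (j0 : DT)
  (p : Om -> R) (hp_pos : forall w, 0 < p w) (hp_sum : \sum_(w : Om) p w = 1)
  (ag : GT -> R) (ad : DT -> R)
  (hag : forall i, 0 <= ag i) (had : forall j, 0 <= ad j)
  (dgp dgm : GT -> R) (ddp ddm : DT -> R)
  (hdgp : forall i, 0 < dgp i) (hdgm : forall i, 0 < dgm i)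
  (hddp : forall j, 0 < ddp j) (hddm : forall j, 0 < ddm j)
  (Gbar : GT -> Om -> R) (Dbar : DT -> Om -> R)
  (hGbar : forall i w, 0 <= Gbar i w) (hDbar : forall j w, 0 <= Dbar j w)
  (g : GT -> R) (d : DT -> R) (Gr : GT -> Om -> R) (Dr : DT -> Om -> R)
  (pi : R) (Pi : Om -> R)
  (hopt : optimal_with_prices p ag ad dgp dgm ddp ddm Gbar Dbar g d Gr Dr pi Pi) :
  let Mpi := pi - expect p Pi in
  let dalpha_plus := Num.min (finmin i0 dgp) (finmin j0 ddp) in
  let dalpha_minus := Num.min (finmin i0 dgm) (finmin j0 ddm) in
  - dalpha_plus <= Mpi <= dalpha_minus.
Proof.
cbv zeta.
have p_ge0 w : 0 <= p w by exact: ltW.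
have supplier i :=
  supplier_distortion_bounds p_ge0 hp_sum hopt i (ltW (hdgp i)) (ltW (hdgm i)).
have consumer j :=
  consumer_distortion_bounds p_ge0 hp_sum hopt j (ltW (hddp j)) (ltW (hddm j)).
rewrite lerNl !le_min -andbA; apply/and4P; split; apply: le_finmin.
- by move=> i; case/andP: (supplier i); rewrite lerNl.
- by move=> j; case/andP: (consumer j); rewrite lerNl.
- by move=> i; case/andP: (supplier i).
- by move=> j; case/andP: (consumer j).
Qed.
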